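(* Let $\mathbf I\subset\mathbb R$ be a bounded interval, $\sigma\in(0,1]$, and $\mathcal Q$ a collection of real-valued measurable functions on $\mathbf I$. Let $L:L^2(\mathbf I)\to\mathbb C$ be a bounded sub-linear functional, let $\mathbf S_\sigma$ be the set of all $f\in L^2(\mathbf I)$ that are $\sigma$-uniform in $\mathcal Q$, and set $$U_\sigma=\sup_{f\in\mathbf S_\sigma,\,f\ne0}\frac{|L(f)|}{\|f\|_{L^2(\mathbf I)}},\qquad Q=\sup_{q\in\mathcal Q}|L(e^{iq})|.$$ Then for all $f\in L^2(\mathbf I)$, $$|L(f)|\le\max\{U_\sigma,\,2\sigma^{-1}Q\}\,\|f\|_{L^2(\mathbf I)}.$$
   Context: A function $f\in L^2(\mathbf I)$ is $\sigma$-uniform in $\mathcal Q$ if $\big|\int_{\mathbf I}f(\xi)e^{-iq(\xi)}d\xi\big|\le\sigma\|f\|_{L^2(\mathbf I)}$ for all $q\in\mathcal Q$; otherwise it is $\sigma$-nonuniform. Sub-linear means $|L(f+g)|\le|L(f)|+|L(g)|$ and $|L(cf)|=|c||L(f)|$ for all $f,g\in L^2(\mathbf I)$, $c\in\mathbb C$; bounded means $|L(f)|\le A\|f\|_{L^2(\mathbf I)}$ for some $A<\infty$. Here $e^{iq}$ denotes the function $\xi\mapsto e^{iq(\xi)}$ on $\mathbf I$. *)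

From mathcomp Require Import all_boot all_order all_algebra.
From mathcomp Require Import all_classical all_reals all_analysis.
From mathcomp Require Export complex.
Set Implicit Arguments. Unset Strict Implicit. Unset Printing Implicit Defensive.
Import Order.TTheory GRing.Theory Num.Theory.
Local Open Scope classical_set_scope.
Local Open Scope ring_scope.

Section Defs.
Variable R : realType.

Definition cmod (z : R[i]) : R := Num.sqrt (complex.Re z ^+ 2 + complex.Im z ^+ 2).

(* the bounded interval with endpoints a, b; the booleans choose whether each
   endpoint is included: a <= x (ba = true) or a < x (ba = false);
   x < b (bb = true) or x <= b (bb = false) *)
Definition bint (a b : R) (ba bb : bool) : set R :=
  [set` Interval (BSide ba a) (BSide bb b)].

Definition cmeasurable (I : set R) (f : R -> R[i]) : Prop :=
  measurable_fun I (fun x => complex.Re (f x)) /\ measurable_fun I (fun x => complex.Im (f x)).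

Definition L2 (I : set R) (f : R -> R[i]) : Prop :=
  cmeasurable I f /\
  (\int[lebesgue_measure]_(x in I) ((cmod (f x)) ^+ 2)%:E < +oo)%E.

Definition L2norm (I : set R) (f : R -> R[i]) : R :=
  Num.sqrt (\int[lebesgue_measure]_(x in I) ((cmod (f x)) ^+ 2)).

Definition cintegral (I : set R) (g : R -> R[i]) : R[i] :=
  Complex (\int[lebesgue_measure]_(x in I) complex.Re (g x))
          (\int[lebesgue_measure]_(x in I) complex.Im (g x)).

Definition cexpi (q : R -> R) : R -> R[i] :=
  fun x => Complex (cos (q x)) (sin (q x)).

Definition sigma_uniform (I : set R) (Q : set (R -> R)) (sigma : R)
    (f : R -> R[i]) : Prop :=
  forall q, Q q ->
    cmod (cintegral I (fun x => f x * cexpi (fun y => - q y) x))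
      <= sigma * L2norm I f.

Definition sublinear (I : set R) (L : (R -> R[i]) -> R[i]) : Prop :=
  (forall f g, L2 I f -> L2 I g ->
     cmod (L (fun x => f x + g x)) <= cmod (L f) + cmod (L g)) /\
  (forall (c : R[i]) f, L2 I f ->
     cmod (L (fun x => c * f x)) = cmod c * cmod (L f)).

Definition bounded_functional (I : set R) (L : (R -> R[i]) -> R[i]) : Prop :=
  exists A : R, forall f, L2 I f -> cmod (L f) <= A * L2norm I f.

Definition Usigma (I : set R) (Q : set (R -> R)) (sigma : R)
    (L : (R -> R[i]) -> R[i]) : \bar R :=
  ereal_sup [set (cmod (L f) / L2norm I f)%:E | f in
    [set f | L2 I f /\ sigma_uniform I Q sigma f /\ L2norm I f != 0]].

Definition Qsup (Q : set (R -> R)) (L : (R -> R[i]) -> R[i]) : \bar R :=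
  ereal_sup [set (cmod (L (cexpi q)))%:E | q in Q].

End Defs.

(* Let M be the least constant with |L f| <= M ||f|| (it exists since L is
   bounded) and k := max(U_sigma, 2 Q / sigma).  A sigma-uniform f obeys the
   bound k directly.  A nonuniform f has |J| > sigma ||f|| for the coefficient
   J = int f e^{-iq} of some q in Q; splitting f = (J/|I|) e^{iq} + g, where
   ||g||^2 = ||f||^2 - |J|^2/|I|, sublinearity gives
     |L f| <= (|J|/|I|) k sigma / 2 + M ||g|| <= (M - sigma^2 (M - k) / (2|I|)) ||f||.
   So if M > k, a constant strictly smaller than M works, contradicting
   minimality; hence M <= k. *)

From mathcomp Require Import all_boot all_order all_algebra.
From mathcomp Require Import all_classical all_reals all_analysis.
From mathcomp Require Import complex measurable_realfun ring lra.
Import Order.TTheory GRing.Theory Num.Theory.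
Local Open Scope classical_set_scope.
Local Open Scope ring_scope.

Local Notation cRe := complex.Re.
Local Notation cIm := complex.Im.

Section complex_coordinates.
Context {R : realType}.
Implicit Types (z w c : R[i]) (q : R -> R).

Lemma cmod_ge0 z : 0 <= cmod z.
Proof. exact: sqrtr_ge0. Qed.

Lemma cmod_sq z : cmod z ^+ 2 = cRe z ^+ 2 + cIm z ^+ 2.
Proof. by rewrite sqr_sqrtr // addr_ge0 // sqr_ge0. Qed.

Lemma cmod_Re_le z : `|cRe z| <= cmod z.
Proof. by rewrite -sqrtr_sqr ler_wsqrtr // lerDl sqr_ge0. Qed.

Lemma cmod_Im_le z : `|cIm z| <= cmod z.
Proof. by rewrite -sqrtr_sqr ler_wsqrtr // lerDr sqr_ge0. Qed.

Lemma ReB z w : cRe (z - w) = cRe z - cRe w. Proof. by case: z; case: w. Qed.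
Lemma ImB z w : cIm (z - w) = cIm z - cIm w. Proof. by case: z; case: w. Qed.
Lemma ReM z w : cRe (z * w) = cRe z * cRe w - cIm z * cIm w.
Proof. by case: z; case: w. Qed.
Lemma ImM z w : cIm (z * w) = cRe z * cIm w + cIm z * cRe w.
Proof. by case: z; case: w. Qed.

Lemma cmod_mul_cexpi c q x : cmod (c * cexpi q x) = cmod c.
Proof.
rewrite /cmod ReM ImM /=; congr Num.sqrt.
have := cos2Dsin2 (q x); set C := cos (q x); set S := sin (q x) => CS.
by rewrite -[RHS]mulr1 -CS; ring.
Qed.

Lemma cmod_sub_sq_le z w : cmod (z - w) ^+ 2 <= 2 * cmod z ^+ 2 + 2 * cmod w ^+ 2.
Proof.
rewrite !cmod_sq ReB ImB.
have := sqr_ge0 (cRe z + cRe w); have := sqr_ge0 (cIm z + cIm w); nra.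
Qed.

Lemma cmod_sub_cexpi_sq z c q x :
  cmod (z - c * cexpi q x) ^+ 2 = cmod z ^+ 2 + cmod c ^+ 2
    - 2 * (cRe c * cRe (z * cexpi (fun y => - q y) x)
           + cIm c * cIm (z * cexpi (fun y => - q y) x)).
Proof.
rewrite !cmod_sq ReB ImB !ReM !ImM /= cosN sinN.
have := cos2Dsin2 (q x); set C := cos (q x); set S := sin (q x) => CS.
apply/eqP; rewrite -subr_eq0; apply/eqP.
transitivity ((cRe c ^+ 2 + cIm c ^+ 2) * (C ^+ 2 + S ^+ 2 - 1)); first ring.
by rewrite CS subrr mulr0.
Qed.

End complex_coordinates.

Lemma projection_step_le {R : realFieldType} {M k s m N j G l : R} :
  0 <= M -> k <= M -> 0 < m -> 0 < N -> 0 <= s -> s * N < j -> 0 <= G ->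
  G ^+ 2 = N ^+ 2 - j ^+ 2 / m ->
  l <= j / m * (k * s / 2) + M * G ->
  l <= (M - s ^+ 2 * (M - k) / (2 * m)) * N.
Proof.
move=> M0 kM m0 N0 s0 sNj G0 GE lE.
have amgm : 2 * N * G <= N ^+ 2 + G ^+ 2 by have := sqr_ge0 (N - G); nra.
have GEm : G ^+ 2 * m = N ^+ 2 * m - j ^+ 2 by rewrite GE; field; rewrite gt_eqF.
have key : 0 <= (j - s * N) * (M * j + s * N * (M - k)).
  have sN0 : 0 <= s * N by rewrite mulr_ge0 // ltW.
  apply: mulr_ge0; first by rewrite subr_ge0 ltW.
  by rewrite addr_ge0 ?mulr_ge0 ?subr_ge0 //; lra.
have MG : 2 * m * N * M * G <= M * (2 * m * N ^+ 2 - j ^+ 2).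
  have : 0 <= m * M by nra.
  nra.
rewrite -(ler_pM2l (mulr_gt0 (mulr_gt0 (ltr0Sn _ 1) m0) N0)).
have -> : 2 * m * N * ((M - s ^+ 2 * (M - k) / (2 * m)) * N) =
  2 * m * M * N ^+ 2 - s ^+ 2 * (M - k) * N ^+ 2 by field; rewrite gt_eqF.
have : 2 * m * N * l <= N * j * k * s + 2 * m * N * M * G.
  have -> : N * j * k * s + 2 * m * N * M * G =
           2 * m * N * (j / m * (k * s / 2) + M * G).
    by field; rewrite gt_eqF.
  by rewrite ler_pM2l // mulr_gt0 // mulr_gt0.
nra.
Qed.

Section L2_finite_measure.
Context {R : realType} {I : set R}.
Hypotheses (mI : measurable (I : set (measurableTypeR R)))
  (finI : (lebesgue_measure I < +oo)%E).
Local Notation mu := (@lebesgue_measure R).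
Local Notation integrable h := (mu.-integrable I (EFin \o h)).
Implicit Types (f g : R -> R[i]) (q : R -> R) (c : R[i]).

Lemma integrable_cst k : integrable (fun=> k).
Proof.
apply/integrableP; split; first exact/measurable_EFinP/measurable_cst.
by rewrite integral_cst //= lte_mul_pinfty.
Qed.

Lemma integrableD_EFin {h1 h2 : R -> R} : integrable h1 -> integrable h2 ->
  integrable (fun x => h1 x + h2 x).
Proof.
move=> i1 i2; apply: (eq_integrable mI _ _ _ (integrableD mI i1 i2)) => x _.
by rewrite /= EFinD.
Qed.

Lemma integrableZl_EFin k {h : R -> R} : integrable h -> integrable (fun x => k * h x).
Proof.
move=> ih; apply: (eq_integrable mI _ _ _ (integrableZl mI k ih)) => x _.
by rewrite /= EFinM.
Qed.

Lemma ge0_integrableP (h : R -> R) :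
  measurable_fun I h -> (forall x, I x -> 0 <= h x) ->
  integrable h <-> (\int[mu]_(x in I) (h x)%:E < +oo)%E.
Proof.
move=> mh h0.
have -> : (\int[mu]_(x in I) (h x)%:E = \int[mu]_(x in I) `|(EFin \o h) x|)%E.
  by apply: eq_integral => x; rewrite inE => Ix /=; rewrite ger0_norm ?h0.
split=> [/integrableP[]//|fin]; apply/integrableP; split => //.
exact/measurable_EFinP.
Qed.

Lemma cmeasurable_cst c : cmeasurable I (fun=> c).
Proof. by split; exact: measurable_cst. Qed.

Lemma cmeasurable_cexpi {q} : measurable_fun I q -> cmeasurable I (cexpi q).
Proof.
move=> mq; split; apply: measurableT_comp => //; apply: continuous_measurable_fun.
  exact: continuous_cos.
exact: continuous_sin.
Qed.

Lemma cmeasurableB {f g} : cmeasurable I f -> cmeasurable I g ->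
  cmeasurable I (fun x => f x - g x).
Proof.
move=> [mf1 mf2] [mg1 mg2]; split.
  by under eq_fun do rewrite ReB; exact: measurable_funB.
by under eq_fun do rewrite ImB; exact: measurable_funB.
Qed.

Lemma cmeasurableM {f g} : cmeasurable I f -> cmeasurable I g ->
  cmeasurable I (fun x => f x * g x).
Proof.
move=> [mf1 mf2] [mg1 mg2]; split.
  by under eq_fun do rewrite ReM; apply: measurable_funB; exact: measurable_funM.
by under eq_fun do rewrite ImM; apply: measurable_funD; exact: measurable_funM.
Qed.

Lemma cmeasurable_cmod_sq {f} : cmeasurable I f ->
  measurable_fun I (fun x => cmod (f x) ^+ 2).
Proof.
move=> [mf1 mf2]; under eq_fun do rewrite cmod_sq.
by apply: measurable_funD; exact: measurable_funX.
Qed.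

Lemma L2_integrable_cmod_sq {f} : L2 I f -> integrable (fun x => cmod (f x) ^+ 2).
Proof.
move=> [mf fin]; apply/ge0_integrableP => //; first exact: cmeasurable_cmod_sq.
by move=> x _; exact: sqr_ge0.
Qed.

Lemma L2_dom f (G : R -> R) : cmeasurable I f -> integrable G ->
  (forall x, I x -> cmod (f x) ^+ 2 <= G x) -> L2 I f.
Proof.
move=> mf iG fG; split => //; apply/ge0_integrableP.
- exact: cmeasurable_cmod_sq.
- by move=> x _; exact: sqr_ge0.
apply: (le_integrable mI _ _ iG).
  by apply/measurable_EFinP; exact: cmeasurable_cmod_sq.
move=> x Ix /=; rewrite lee_fin ger0_norm ?sqr_ge0 //.
exact: le_trans (fG x Ix) (ler_norm _).
Qed.

(* On a set of finite measure L^2 embeds in L^1, via |t| <= 1 + |f|^2. *)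
Lemma L2_integrable_dom {f} (t : R -> R) : L2 I f -> measurable_fun I t ->
  (forall x, `|t x| <= cmod (f x)) -> integrable t.
Proof.
move=> hf mt tf; have i1 := integrable_cst 1.
have i2 := L2_integrable_cmod_sq hf.
apply: (le_integrable mI _ _ (integrableD_EFin i1 i2)); first exact/measurable_EFinP.
move=> x _ /=; rewrite lee_fin [X in _ <= X]ger0_norm ?addr_ge0 ?sqr_ge0 //.
apply: le_trans (tf x) _; have := sqr_ge0 (cmod (f x) - 1); nra.
Qed.

Lemma L2_integrable_Re {f} : L2 I f -> integrable (fun x => cRe (f x)).
Proof.
move=> hf; apply: (L2_integrable_dom _ hf) => [|x]; last exact: cmod_Re_le.
by case: hf => -[].
Qed.

Lemma L2_integrable_Im {f} : L2 I f -> integrable (fun x => cIm (f x)).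
Proof.
move=> hf; apply: (L2_integrable_dom _ hf) => [|x]; last exact: cmod_Im_le.
by case: hf => -[].
Qed.

Lemma L2_mul_cexpi c {q} : measurable_fun I q -> L2 I (fun x => c * cexpi q x).
Proof.
move=> mq; apply: (L2_dom _ (fun=> cmod c ^+ 2)).
- exact: cmeasurableM (cmeasurable_cst _) (cmeasurable_cexpi mq).
- exact: integrable_cst.
- by move=> x _; rewrite cmod_mul_cexpi.
Qed.

Lemma L2_cexpi {q} : measurable_fun I q -> L2 I (cexpi q).
Proof. by move=> /(L2_mul_cexpi 1); under eq_fun do rewrite mul1r. Qed.

Lemma L2_cexpi_mul {f q} : L2 I f -> measurable_fun I q ->
  L2 I (fun x => f x * cexpi q x).
Proof.
move=> hf mq; apply: (L2_dom _ (fun x => cmod (f x) ^+ 2)).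
- by apply: cmeasurableM (cmeasurable_cexpi mq); case: hf.
- exact: L2_integrable_cmod_sq.
- by move=> x _; rewrite cmod_mul_cexpi.
Qed.

Lemma L2_sub_mul_cexpi {f} c {q} : L2 I f -> measurable_fun I q ->
  L2 I (fun x => f x - c * cexpi q x).
Proof.
move=> hf mq; pose G x := 2 * cmod (f x) ^+ 2 + 2 * cmod c ^+ 2.
apply: (L2_dom _ G).
- apply: cmeasurableB; first by case: hf.
  exact: cmeasurableM (cmeasurable_cst _) (cmeasurable_cexpi mq).
- apply: integrableD_EFin (integrable_cst _).
  exact: integrableZl_EFin (L2_integrable_cmod_sq hf).
by move=> x _; rewrite /G -(cmod_mul_cexpi c q x); exact: cmod_sub_sq_le.
Qed.

Lemma L2norm_ge0 f : 0 <= L2norm I f.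
Proof. exact: sqrtr_ge0. Qed.

Lemma L2norm_sq f : L2norm I f ^+ 2 = \int[mu]_(x in I) cmod (f x) ^+ 2.
Proof. by rewrite sqr_sqrtr // Rintegral_ge0 // => x _; exact: sqr_ge0. Qed.

Lemma L2norm_null {f} : L2 I f -> mu I = 0 -> L2norm I f = 0.
Proof.
move=> [mf _] mu0; rewrite /L2norm /Rintegral null_set_integral //= ?sqrtr0 //.
by apply/measurable_EFinP; exact: cmeasurable_cmod_sq.
Qed.

Lemma L2norm_sub_mul_cexpi {f} c {q} : L2 I f -> measurable_fun I q ->
  let J := cintegral I (fun x => f x * cexpi (fun y => - q y) x) in
  L2norm I (fun x => f x - c * cexpi q x) ^+ 2 =
  L2norm I f ^+ 2 + cmod c ^+ 2 * fine (mu I) - 2 * (cRe c * cRe J + cIm c * cIm J).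
Proof.
move=> hf mq J; set e := cexpi (fun y => - q y).
have hfe : L2 I (fun x => f x * e x).
  by apply: L2_cexpi_mul hf _; exact: measurableT_comp mq.
have iRe := L2_integrable_Re hfe; have iIm := L2_integrable_Im hfe.
have iReIm :=
  integrableD_EFin (integrableZl_EFin (cRe c) iRe) (integrableZl_EFin (cIm c) iIm).
have if2 := L2_integrable_cmod_sq hf.
rewrite !L2norm_sq; under eq_Rintegral do rewrite cmod_sub_cexpi_sq -/e.
rewrite (RintegralB mI); last 2 first.
- exact: integrableD_EFin if2 (integrable_cst _).
- exact: integrableZl_EFin.
rewrite (RintegralD mI if2 (integrable_cst _)) Rintegral_cst //.
rewrite (RintegralZl _ mI iReIm) (RintegralD mI); last 2 first.
- exact: integrableZl_EFin.
- exact: integrableZl_EFin.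
by rewrite (RintegralZl _ mI iRe) (RintegralZl _ mI iIm).
Qed.

End L2_finite_measure.

Definition bounded_by {R : realType} (I : set R) (L : (R -> R[i]) -> R[i]) (M : R) :=
  forall f, L2 I f -> cmod (L f) <= M * L2norm I f.

Section sublinear_functional.
Context {R : realType} {I : set R} {L : (R -> R[i]) -> R[i]}.
Hypotheses (mI : measurable (I : set (measurableTypeR R)))
  (finI : (lebesgue_measure I < +oo)%E).
Hypotheses (Lsub : sublinear I L) (Lbd : bounded_functional I L).
Local Notation m := (fine (lebesgue_measure I)).

Lemma cmod_L_L2norm_eq0 {f} : L2 I f -> L2norm I f = 0 -> cmod (L f) = 0.
Proof.
move=> hf N0; apply/le_anti; rewrite cmod_ge0 andbT.
by case: Lbd => A /(_ f hf); rewrite N0 mulr0.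
Qed.

Lemma bounded_by_le M M' : bounded_by I L M -> M <= M' -> bounded_by I L M'.
Proof.
by move=> hM MM' f hf; apply: le_trans (hM f hf) _; rewrite ler_wpM2r ?L2norm_ge0.
Qed.

Lemma bounded_by_least : exists M, [/\ 0 <= M, bounded_by I L M &
  forall M', 0 <= M' -> bounded_by I L M' -> M <= M'].
Proof.
case: Lbd => A hA.
pose ratios := [set r : R | r = 0 \/ exists2 f, L2 I f /\ 0 < L2norm I f &
   r = cmod (L f) / L2norm I f].
have ub : ubound ratios `|A|.
  move=> r [->|[f [hf N0] ->]]; first exact: normr_ge0.
  rewrite ler_pdivrMr //; apply: le_trans (hA f hf) _.
  by rewrite ler_wpM2r ?ler_norm // ltW.
have hasub : has_sup ratios by split; [exists 0; left | exists `|A|].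
exists (sup ratios); split.
- exact: sup_ubound hasub.2 _ (or_introl erefl).
- move=> f hf; have [N0|N0] := eqVneq (L2norm I f) 0.
    by rewrite N0 mulr0 cmod_L_L2norm_eq0.
  have Npos : 0 < L2norm I f by rewrite lt_def N0 L2norm_ge0.
  by rewrite -ler_pdivrMr //; apply: sup_ubound hasub.2 _ _; right; exists f.
- move=> M' M'0 hM'; apply: ge_sup hasub.1 _ => r [->//|[f [hf N0] ->]].
  by rewrite ler_pdivrMr // hM'.
Qed.

Context {Q : set (R -> R)} {s k : R}.
Hypotheses (s0 : 0 < s) (mQ : forall q, Q q -> measurable_fun I q).
Hypothesis Lunif : forall f, L2 I f -> sigma_uniform I Q s f ->
  cmod (L f) <= k * L2norm I f.
Hypothesis Lexp : forall q, Q q -> cmod (L (cexpi q)) <= k * s / 2.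

Lemma nonuniform_bound {M f} : 0 < m -> 0 <= M -> k <= M -> bounded_by I L M ->
  L2 I f -> ~ sigma_uniform I Q s f ->
  cmod (L f) <= (M - s ^+ 2 * (M - k) / (2 * m)) * L2norm I f.
Proof.
move=> m0 M0 kM hM hf fnu; case: Lsub => Ladd Lmul.
have [N0|N0] := eqVneq (L2norm I f) 0.
  by rewrite N0 mulr0 cmod_L_L2norm_eq0.
have Npos : 0 < L2norm I f by rewrite lt_def N0 L2norm_ge0.
have [q Qq hq] : exists2 q, Q q &
    s * L2norm I f < cmod (cintegral I (fun x => f x * cexpi (fun y => - q y) x)).
  apply: contra_notP fnu => nex q Qq; rewrite leNgt; apply/negP => hq.
  by apply: nex; exists q.
set J := cintegral _ _ in hq; have mq := mQ _ Qq.
pose c := Complex (cRe J / m) (cIm J / m).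
have cJ : cmod c = cmod J / m.
  rewrite -[RHS]ger0_norm ?divr_ge0 ?cmod_ge0 ?ltW // -sqrtr_sqr expr_div_n cmod_sq.
  by rewrite {1}/cmod; apply: congr1; rewrite /c /=; field; rewrite gt_eqF.
have gE : L2norm I (fun x => f x - c * cexpi q x) ^+ 2 =
          L2norm I f ^+ 2 - cmod J ^+ 2 / m.
  rewrite (L2norm_sub_mul_cexpi mI finI c hf mq) -/J cJ expr_div_n cmod_sq /=.
  by field; rewrite gt_eqF.
apply: (projection_step_le M0 kM m0 Npos (ltW s0) hq (L2norm_ge0 _) gE).
have -> : L f = L (fun x => c * cexpi q x + (f x - c * cexpi q x)).
  by congr L; apply/funext => x; rewrite addrC subrK.
have hg := L2_sub_mul_cexpi mI finI c hf mq.
apply: le_trans (Ladd _ _ (L2_mul_cexpi mI finI c mq) hg) _.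
rewrite (Lmul c (cexpi q) (L2_cexpi mI finI mq)) cJ.
apply: lerD; last exact: hM _ hg.
by apply: ler_wpM2l; [rewrite divr_ge0 ?cmod_ge0 ?ltW | exact: Lexp].
Qed.

Lemma bounded_by_improve M : 0 < m -> 0 <= M -> bounded_by I L M ->
  bounded_by I L (Num.max k (M - s ^+ 2 * (M - k) / (2 * m))).
Proof.
move=> m0 M0 hM f hf; have N0 := L2norm_ge0 f.
have [fu|fnu] := pselect (sigma_uniform I Q s f).
  by apply: le_trans (Lunif _ hf fu) _; rewrite ler_wpM2r // le_max lexx.
have [Mk|kM] := leP M k.
  by apply: le_trans (hM f hf) _; rewrite ler_wpM2r // le_max Mk.
apply: le_trans (nonuniform_bound m0 M0 (ltW kM) hM hf fnu) _.
by rewrite ler_wpM2r // le_max lexx orbT.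
Qed.

Lemma bounded_by_uniform_bound : 0 <= k -> bounded_by I L k.
Proof.
move=> k0; have [mu0|mu0] := eqVneq (lebesgue_measure I) 0%E.
  move=> f hf; rewrite (L2norm_null mI hf mu0) mulr0.
  by rewrite cmod_L_L2norm_eq0 // (L2norm_null mI hf mu0).
have m0 : 0 < m by rewrite fine_gt0 // lt0e mu0 measure_ge0 finI.
have [M [M0 hM Mleast]] := bounded_by_least.
have [Mk|kM] := leP M k; first exact: bounded_by_le hM Mk.
set d := s ^+ 2 * (M - k) / (2 * m).
have d0 : 0 < d by rewrite divr_gt0 ?mulr_gt0 ?exprn_gt0 ?subr_gt0.
have : M <= Num.max k (M - d).
  by apply: Mleast (bounded_by_improve _ m0 M0 hM); rewrite le_max k0.
by rewrite leNgt gt_max kM /= => /negP[]; lra.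
Qed.

End sublinear_functional.

Section extended_bounds.
Context {R : realType} {I : set R} {Q : set (R -> R)} {L : (R -> R[i]) -> R[i]}.
Context {s : R}.
Hypothesis Lbd : bounded_functional I L.

Lemma Usigma_ge {f} : L2 I f -> sigma_uniform I Q s f -> L2norm I f != 0 ->
  ((cmod (L f) / L2norm I f)%:E <= Usigma I Q s L)%E.
Proof. by move=> hf fu N0; apply: ereal_sup_ubound; exists f. Qed.

Lemma Usigma_bound {k} : (Usigma I Q s L <= k%:E)%E ->
  forall f, L2 I f -> sigma_uniform I Q s f -> cmod (L f) <= k * L2norm I f.
Proof.
move=> Uk f hf fu; have [N0|N0] := eqVneq (L2norm I f) 0.
  by rewrite N0 mulr0 (cmod_L_L2norm_eq0 Lbd hf N0).
have Npos : 0 < L2norm I f by rewrite lt_def N0 L2norm_ge0.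
by rewrite -ler_pdivrMr // -lee_fin (le_trans (Usigma_ge hf fu N0)).
Qed.

Lemma Qsup_ge {q} : Q q -> ((cmod (L (cexpi q)))%:E <= Qsup Q L)%E.
Proof. by move=> Qq; apply: ereal_sup_ubound; exists q. Qed.

Lemma Qsup_bound {k q} : 0 < s -> ((2 / s)%:E * Qsup Q L <= k%:E)%E -> Q q ->
  cmod (L (cexpi q)) <= k * s / 2.
Proof.
move=> s0 Xk Qq; have : 2 / s * cmod (L (cexpi q)) <= k.
  rewrite -lee_fin EFinM (le_trans _ Xk) // lee_wpmul2l ?Qsup_ge // lee_fin.
  by rewrite divr_ge0 // ltW.
move=> h; have -> : k * s / 2 = s / 2 * k by ring.
have -> : cmod (L (cexpi q)) = s / 2 * (2 / s * cmod (L (cexpi q))).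
  by field; rewrite gt_eqF.
by apply: ler_wpM2l h; rewrite divr_ge0 // ltW.
Qed.

Lemma maxe_Usigma_Qsup_ge0 f : 0 < s -> L2 I f -> L2norm I f != 0 ->
  (0 <= maxe (Usigma I Q s L) ((2 / s)%:E * Qsup Q L))%E.
Proof.
move=> s0 hf N0; rewrite le_max; apply/orP.
have [fu|fnu] := pselect (sigma_uniform I Q s f).
  left; apply: le_trans (Usigma_ge hf fu N0).
  by rewrite lee_fin divr_ge0 ?cmod_ge0 ?L2norm_ge0.
have [q Qq] : exists q, Q q.
  by apply: contra_notP fnu => noQ q Qq; exfalso; apply: noQ; exists q.
right; apply: mule_ge0; first by rewrite lee_fin divr_ge0 // ltW.
by apply: le_trans (Qsup_ge Qq); rewrite lee_fin cmod_ge0.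
Qed.

End extended_bounds.

Lemma measurable_bint {R : realType} (a b : R) (ba bb : bool) :
  measurable (bint a b ba bb : set (measurableTypeR R)).
Proof. exact: measurable_itv. Qed.

Lemma lebesgue_measure_bint_lty {R : realType} (a b : R) (ba bb : bool) :
  (lebesgue_measure (bint a b ba bb) < +oo)%E.
Proof.
by rewrite /bint lebesgue_measure_itv; case: ifP => _; rewrite ?ltry // -EFinD ltry.
Qed.

Theorem theorem7p2 (R : realType) (a b : R) (ba bb : bool) (sigma : R)
    (Q : set (R -> R)) (L : (R -> R[i]) -> R[i]) :
  0 < sigma <= 1 ->
  (forall q, Q q -> measurable_fun (bint a b ba bb) q) ->
  sublinear (bint a b ba bb) L ->
  bounded_functional (bint a b ba bb) L ->
  forall f, L2 (bint a b ba bb) f ->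
  ((cmod (L f))%:E <=
     maxe (Usigma (bint a b ba bb) Q sigma L) ((2 / sigma)%:E * Qsup Q L)
       * (L2norm (bint a b ba bb) f)%:E)%E.
Proof.
move=> /andP[s0 _] mQ Lsub Lbd f hf.
have mI := measurable_bint a b ba bb; have finI := lebesgue_measure_bint_lty a b ba bb.
set I := bint a b ba bb in mQ Lsub Lbd hf mI finI *.
have [N0|N0] := eqVneq (L2norm I f) 0.
  by rewrite N0 mule0 (cmod_L_L2norm_eq0 Lbd hf N0).
have : (0 <= maxe (Usigma I Q sigma L) ((2 / sigma)%:E * Qsup Q L))%E.
  exact: maxe_Usigma_Qsup_ge0 f s0 hf N0.
case hk : (maxe (Usigma I Q sigma L) _) => [k| |] max0; last 2 first.
- by rewrite gt0_mulye ?leey // lte_fin lt_def N0 L2norm_ge0.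
- by move: max0; rewrite leeNy_eq.
move: (lexx (k%:E)); rewrite -[X in (X <= _)%E]hk ge_max => /andP[Uk Xk].
rewrite -EFinM lee_fin; rewrite lee_fin in max0.
apply: (bounded_by_uniform_bound mI finI Lsub Lbd s0 mQ (Usigma_bound Lbd Uk) _ max0
          f hf).
by move=> q Qq; exact: Qsup_bound s0 Xk Qq.
Qed.
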